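(* Every zero-error randomized streaming algorithm for \textsc{Find-Duplicate} that is $\frac{n}{s}$-concentrated must use $\Omega\left(\frac{s}{\log n}\right)$ space.
   Context: \textsc{Find-Duplicate}: the input is a stream of $3n/2$ integers, each in $\{1,\dots,n\}$; the goal is to output an integer that appears at least twice in the stream. A randomized algorithm is zero-error if with probability one it either outputs a valid output (an integer that indeed appears at least twice) or outputs the failure symbol $\bot$; it never outputs an invalid answer. An algorithm $A$ is $k$-concentrated if for every valid input $x$ there is some output $F(x)$ such that $\Pr_r[A(x,r)=F(x)]\ge \frac1k$, where $r$ is the algorithm's randomness. Space is measured in bits of memory of the one-pass streaming algorithm. *)

From HB Require Import structures.
From mathcomp Require Import all_boot all_order all_algebra.
From mathcomp Require Import reals exp.
Set Implicit Arguments. Unset Strict Implicit. Unset Printing Implicit Defensive.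
Import Order.TTheory GRing.Theory Num.Theory.
Local Open Scope ring_scope.

(* A one-pass streaming algorithm on streams of length m over the alphabet
   'I_n (representing {1,...,n}), with exactly S bits of memory
   (states = S-bit strings).  Randomness: at initialization, at every step,
   and at output time the algorithm receives a FRESH independent uniform
   sample from the finite set Rnd; random values must be stored in memory
   if they are to be reused.
   Output None stands for the failure symbol ⊥. *)
Record StreamAlg (n m S : nat) (Rnd : finType) := {
  sa_init : Rnd -> S.-tuple bool;
  sa_step : 'I_m -> S.-tuple bool -> 'I_n -> Rnd -> S.-tuple bool;
  sa_out  : S.-tuple bool -> Rnd -> option 'I_n }.

(* full random string: (initial coin, per-step coins, output coin) *)
Definition RandStr (m : nat) (Rnd : finType) : finType :=
  (Rnd * {ffun 'I_m -> Rnd} * Rnd)%type.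

Section Run.
Variables (n m S : nat) (Rnd : finType) (A : StreamAlg n m S Rnd).

Fixpoint sa_state (x : m.-tuple 'I_n) (r : RandStr m Rnd) (j : nat)
  : S.-tuple bool :=
  match j with
  | 0 => sa_init A r.1.1
  | j'.+1 =>
      match insub j' : option 'I_m with
      | Some t => sa_step A t (sa_state x r j') (tnth x t) (r.1.2 t)
      | None => sa_state x r j'
      end
  end.

Definition sa_run (x : m.-tuple 'I_n) (r : RandStr m Rnd) : option 'I_n :=
  sa_out A (sa_state x r m) r.2.

Definition sa_prob {R : realType} (x : m.-tuple 'I_n) (y : option 'I_n) : R :=
  #|[set r : RandStr m Rnd | sa_run x r == y]|%:R / #|RandStr m Rnd|%:R.

Definition is_dup (x : m.-tuple 'I_n) (a : 'I_n) : bool := (1 < count_mem a x)%N.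

(* zero-error: with probability one (i.e. for every random string, as the
   distribution is uniform on a finite set) the output is ⊥ or a duplicate *)
Definition zero_error : Prop :=
  forall x r, match sa_run x r with None => true | Some a => is_dup x a end.

Definition concentrated {R : realType} (k : R) : Prop :=
  forall x : m.-tuple 'I_n, exists a : 'I_n, k^-1 <= sa_prob (R:=R) x (Some a).

End Run.

Definition fd_len (n : nat) : nat := (3 * n)./2.

From HB Require Import structures.
From mathcomp Require Import all_boot all_order all_algebra.
From mathcomp Require Import reals exp.
From mathcomp Require Import zify ring lra.
Set Implicit Arguments. Unset Strict Implicit. Unset Printing Implicit Defensive.
Import Order.TTheory GRing.Theory Num.Theory.

(* Fix the random string and feed the algorithm a set U of L = 3n/4 symbols followed
   by a duplicate-free suffix v.  By zero error every output lies in U and in v; as the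
   run sees U only through the memory state after U, the output even lies in the core
   of U's fiber: the intersection of all L-sets leading to the same state.  A fiber
   whose core has j elements has at most C(n-j, L-j) <= (3/4)^j C(n, L) members, so
   with 2^S states the cores have average size O(S + log n).  Conversely, choosing
   suffixes that avoid the outputs found so far, concentration yields n/8 distinct
   outputs in U, each lying in the core for an s/n fraction of the random strings.
   Hence s = O(S + log n); and S > 0, since without memory the output ignores the
   input. *)

Lemma bin_sub_diag_le n L j : 4 * L <= 3 * n -> j <= L ->
  'C(n - j, L - j) * 4 ^ j <= 'C(n, L) * 3 ^ j.
Proof.
move=> L_small; elim: j => [|j IH] jL; first by rewrite !subn0 !expn0 !muln1.
have bin_step := mul_bin_diag (n - j) (L - j).-1.
have [e1 e2 e3] : [/\ (n - j).-1 = n - j.+1, (L - j).-1.+1 = L - j & (L - j).-1 = L - j.+1].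
  by split; lia.
rewrite e1 e2 e3 in bin_step.
have L_small' : 4 * (L - j) <= 3 * (n - j) by lia.
have nj_gt0 : 0 < n - j by lia.
rewrite -(leq_pmul2l nj_gt0) !expnS mulnA bin_step.
apply: (@leq_trans (4 * (L - j) * ('C(n - j, L - j) * 4 ^ j))); first by apply: eq_leq; ring.
apply: (@leq_trans (3 * (n - j) * ('C(n, L) * 3 ^ j))); last by apply: eq_leq; ring.
exact: leq_mul L_small' (IH (ltnW jL)).
Qed.

Lemma leq_mul_exp_ratio p q a b i j : 0 < q -> p <= q -> i <= j ->
  a * q ^ j <= b * p ^ j -> a * q ^ i <= b * p ^ i.
Proof.
move=> q_gt0 pq /subnKC <-; move: (j - i) => k; rewrite !expnD !mulnA => h.
rewrite -(@leq_pmul2r (q ^ k)) ?expn_gt0 ?q_gt0 //.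
apply: (leq_trans h); rewrite leq_mul2l; apply/orP; right.
by case: (posnP k) => [->|k_gt0] //; rewrite leq_exp2r.
Qed.

Lemma exp2_exp3_le_exp4 S l n : n <= 2 ^ l ->
  2 ^ S * n * 3 ^ (3 * (S + l)) <= 4 ^ (3 * (S + l)).
Proof.
move=> n_le; rewrite !expnM (_ : 3 ^ 3 = 27) // (_ : 4 ^ 3 = 64) //.
apply: (@leq_trans (2 ^ (S + l) * 27 ^ (S + l))).
  by rewrite leq_mul2r [2 ^ (S + l)]expnD leq_mul2l n_le !orbT.
by rewrite -expnMn; case: (posnP (S + l)) => [-> | Sl_gt0] //; rewrite leq_exp2r.
Qed.

Section FiberCore.
Variables (T St : finType) (L : nat) (sig : {set T} -> St).

Definition fiber (s0 : St) := [set U : {set T} | (#|U| == L) && (sig U == s0)].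
Definition fiber_core (s0 : St) := \bigcap_(U in fiber s0) U.

Lemma card_supsets_le (I : {set T}) :
  #|[set U : {set T} | (#|U| == L) && (I \subset U)]| <= 'C(#|T| - #|I|, L - #|I|).
Proof.
set D := [set U : {set T} | _].
have inj_diff : {in D &, injective (fun U => U :\: I)}.
  move=> U V; rewrite !inE => /andP[_ IU] /andP[_ IV] eUV; apply/setP=> x.
  have := congr1 (fun W : {set T} => x \in W) eUV; rewrite !inE.
  by case xI: (x \in I) => //= _; rewrite (subsetP IU) ?(subsetP IV).
rewrite -(card_in_imset inj_diff) (_ : #|T| - #|I| = #|~: I|); last first.
  by rewrite -(cardsC I) addKn.
rewrite -cards_draws; apply/subset_leq_card/subsetP=> B /imsetP[U].
rewrite !inE => /andP[/eqP UL IU] ->.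
by rewrite cardsDS // UL eqxx andbT setDE subsetIr.
Qed.

Hypothesis h4L : 4 * L <= 3 * #|T|.

Lemma card_fiber_le s0 j : j <= #|fiber_core s0| ->
  #|fiber s0| * 4 ^ j <= 'C(#|T|, L) * 3 ^ j.
Proof.
move=> hj; have [-> // | /card_gt0P[U0 U0s0]] := posnP #|fiber s0|.
have core_sub U : U \in fiber s0 -> fiber_core s0 \subset U by exact: bigcap_inf.
have core_L : #|fiber_core s0| <= L.
  by move: U0s0 (core_sub U0 U0s0); rewrite inE => /andP[/eqP <- _] /subset_leq_card.
apply: (leq_mul_exp_ratio _ (isT : 3 <= 4) hj) => //.
apply: leq_trans (bin_sub_diag_le h4L core_L); rewrite leq_mul2r; apply/orP; right.
apply: leq_trans (card_supsets_le _); apply/subset_leq_card/subsetP=> U Us0.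
by rewrite inE core_sub // andbT; move: Us0; rewrite inE => /andP[].
Qed.

Lemma sum_card_fiber_core j : #|St| * #|T| * 3 ^ j <= 4 ^ j ->
  \sum_(U : {set T} | #|U| == L) #|fiber_core (sig U)| <= 'C(#|T|, L) * j.+1.
Proof.
move=> hj; rewrite -(@leq_pmul2r (4 ^ j)) ?expn_gt0 // big_distrl /=.
rewrite (partition_big sig predT) //=.
apply: (@leq_trans (\sum_s0 (#|fiber s0| * j * 4 ^ j + #|T| * ('C(#|T|, L) * 3 ^ j)))).
  apply: leq_sum => s0 _.
  rewrite (eq_bigr (fun _ => #|fiber_core s0| * 4 ^ j)); last by move=> U /andP[_ /eqP->].
  rewrite sum_nat_cond_const.
  have [core_le | core_gt] := leqP #|fiber_core s0| j.
    by apply: leq_trans (leq_addr _ _); rewrite -mulnA leq_mul2l leq_mul2r core_le !orbT.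
  apply: leq_trans (leq_addl _ _); rewrite mulnCA; apply: leq_mul.
    exact: max_card.
  exact: card_fiber_le (ltnW core_gt).
rewrite big_split /= sum_nat_const -!big_distrl /=.
have -> : \sum_s0 #|fiber s0| = 'C(#|T|, L).
  rewrite -(card_draws T L) -sum1_card (partition_big sig predT) //=.
  by apply: eq_bigr => s0 _; rewrite sum1dep_card; apply: eq_card => U; rewrite !inE.
rewrite mulnSr mulnDl leq_add2l.
by apply: leq_trans (leq_mul (leqnn _) hj); apply: eq_leq; ring.
Qed.

End FiberCore.

Lemma card_RandStr_gt0 m (Rnd : finType) : 0 < #|Rnd| -> 0 < #|RandStr m Rnd|.
Proof. by case/card_gt0P=> r0 _; apply/card_gt0P; exists (r0, [ffun=> r0], r0). Qed.

Section Runs.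
Variables (n m S : nat) (Rnd : finType) (A : StreamAlg n m S Rnd).

Lemma sa_state_prefix (x x' : m.-tuple 'I_n) r j :
  (forall i : 'I_m, i < j -> tnth x i = tnth x' i) ->
  sa_state A x r j = sa_state A x' r j.
Proof.
elim: j => [|j IH] //= eq_pre; rewrite IH => [|i /ltnW]; last exact: eq_pre.
by case: insubP => // t _ tj; rewrite eq_pre ?tj.
Qed.

Lemma sa_run_suffix (x x' : m.-tuple 'I_n) r j : j <= m ->
  sa_state A x r j = sa_state A x' r j ->
  (forall i : 'I_m, j <= i -> tnth x i = tnth x' i) ->
  sa_run A x r = sa_run A x' r.
Proof.
move=> jm eq_j eq_suf; suff eq_after k : sa_state A x r (j + k) = sa_state A x' r (j + k).
  by rewrite /sa_run; have := eq_after (m - j); rewrite subnKC // => ->.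
elim: k => [|k IH]; first by rewrite addn0.
by rewrite addnS /=; case: insubP => // t _ tk; rewrite IH eq_suf // tk leq_addr.
Qed.

Definition sa_count (x : m.-tuple 'I_n) (a : 'I_n) : nat :=
  #|[set r : RandStr m Rnd | sa_run A x r == Some a]|.

Lemma sa_count_gt0P x a : reflect (exists r, sa_run A x r = Some a) (0 < sa_count x a).
Proof.
apply: (iffP card_gt0P) => [[r] | [r xra]]; last by exists r; rewrite inE xra.
by rewrite inE => /eqP; exists r.
Qed.

Lemma zero_error_memory_gt0 (x : m.-tuple 'I_n) r a :
  zero_error A -> 1 < n -> sa_run A x r = Some a -> 0 < S.
Proof.
(* With no memory, a constant stream of some [b != a] would also output [a]. *)
move=> zeroA n_gt1 xa; rewrite lt0n; apply/negP => /eqP S0.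
have nil_state (t : S.-tuple bool) : val t = [::] by apply/size0nil; rewrite size_tuple.
have same_state (t t' : S.-tuple bool) : t = t' by apply: val_inj; rewrite !nil_state.
have /card_gt0P[b ba] : 0 < #|predC1 a| by rewrite cardC1 card_ord; lia.
have := zeroA (nseq_tuple m b) r.
rewrite /sa_run (same_state (sa_state A (nseq_tuple m b) r m) (sa_state A x r m)).
rewrite -/(sa_run A x r) xa.
by move: ba; rewrite inE /is_dup /= count_nseq -[pred1 a b]/(b == a) => /negbTE->.
Qed.

Variable d : 'I_n.

(* Junk value [nseq m d] unless [#|U| + size v = m]. *)
Definition cat_stream (U : {set 'I_n}) (v : seq 'I_n) : m.-tuple 'I_n :=
  insubd (nseq_tuple m d) (enum U ++ v).

Section CatStream.
Variables (U : {set 'I_n}) (v : seq 'I_n).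
Hypothesis size_Uv : #|U| + size v = m.

Lemma cat_streamE : val (cat_stream U v) = enum U ++ v.
Proof. by rewrite /cat_stream insubdK // unfold_in /= size_cat -cardE size_Uv. Qed.

Lemma tnth_cat_stream_prefix (i : 'I_m) : i < #|U| ->
  tnth (cat_stream U v) i = nth d (enum U) i.
Proof. by move=> iU; rewrite (tnth_nth d) cat_streamE nth_cat -cardE iU. Qed.

Lemma tnth_cat_stream_suffix (i : 'I_m) : #|U| <= i ->
  tnth (cat_stream U v) i = nth d v (i - #|U|).
Proof. by move=> Ui; rewrite (tnth_nth d) cat_streamE nth_cat -cardE ltnNge Ui. Qed.

Lemma is_dup_cat_stream a : uniq v -> is_dup (cat_stream U v) a -> (a \in U) && (a \in v).
Proof.
move=> uv; rewrite /is_dup cat_streamE count_cat !count_uniq_mem ?enum_uniq // mem_enum.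
by case: (a \in U); case: (a \in v).
Qed.

End CatStream.
End Runs.

Section PrefixFibers.
Variables (n m S : nat) (Rnd : finType) (A : StreamAlg n m S Rnd).
Hypothesis zeroA : zero_error A.
Variables (L T : nat) (d : 'I_n).
Hypothesis LT_m : L + T = m.

Definition prefix_state (r : RandStr m Rnd) (U : {set 'I_n}) : S.-tuple bool :=
  sa_state A (cat_stream m d U (nseq T d)) r L.

Lemma prefix_stateE r (U : {set 'I_n}) v : #|U| = L -> size v = T ->
  sa_state A (cat_stream m d U v) r L = prefix_state r U.
Proof.
move=> UL vT; apply: sa_state_prefix => i iL.
by rewrite !tnth_cat_stream_prefix ?size_nseq ?UL ?vT.
Qed.

Lemma sa_run_cat_stream_fiber r (U U' : {set 'I_n}) v :
  #|U| = L -> #|U'| = L -> size v = T ->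
  prefix_state r U = prefix_state r U' ->
  sa_run A (cat_stream m d U v) r = sa_run A (cat_stream m d U' v) r.
Proof.
move=> UL U'L vT eq_pre; apply: (sa_run_suffix (j := L)); first by rewrite -LT_m leq_addr.
  by rewrite !prefix_stateE.
by move=> i Li; rewrite !tnth_cat_stream_suffix ?UL ?U'L ?vT.
Qed.

Lemma sa_run_in_fiber_core r (U : {set 'I_n}) v a : #|U| = L -> uniq v -> size v = T ->
  sa_run A (cat_stream m d U v) r = Some a ->
  a \in fiber_core L (prefix_state r) (prefix_state r U).
Proof.
move=> UL uv vT xa; apply/bigcapP => U'; rewrite inE => /andP[/eqP U'L /eqP eq_pre].
have := zeroA (cat_stream m d U' v) r.
rewrite -(sa_run_cat_stream_fiber UL U'L vT (esym eq_pre)) xa.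
have size_Uv : #|U'| + size v = m by rewrite U'L vT.
by move/(is_dup_cat_stream size_Uv uv) => /andP[].
Qed.

Variables (R : numDomainType) (θ : R).
Hypotheses (θ_gt0 : (0 < θ)%R)
  (heavy : forall x, exists a, (θ <= (sa_count A x a)%:R)%R).

Lemma heavy_outputs_subset (U : {set 'I_n}) i : #|U| = L -> i <= n - T ->
  exists K : {set 'I_n}, [/\ #|K| = i, K \subset U &
    forall a, a \in K -> exists v, [/\ uniq v, size v = T &
      (θ <= (sa_count A (cat_stream m d U v) a)%:R)%R]].
Proof.
move=> UL; elim: i => [|i IH] iT.
  by exists set0; rewrite cards0 sub0set; split=> // a; rewrite inE.
have [K [Ki KU heavyK]] := IH (ltnW iT).
(* Outputs on [cat_stream U v] lie in [v], so a suffix avoiding [K] yields a new one. *)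
pose v := take T (enum (~: K)).
have uv : uniq v by rewrite take_uniq ?enum_uniq.
have vT : size v = T.
  by rewrite size_takel // -cardE cardsCs setCK card_ord; lia.
have [a xa] := heavy (cat_stream m d U v).
have /sa_count_gt0P[r xra] : 0 < sa_count A (cat_stream m d U v) a.
  by rewrite -(ltr0n R); exact: lt_le_trans θ_gt0 xa.
have size_Uv : #|U| + size v = m by rewrite UL vT.
have := zeroA (cat_stream m d U v) r.
rewrite xra => /(is_dup_cat_stream size_Uv uv) /andP[aU av].
have aK : a \notin K by move: av => /mem_take; rewrite mem_enum inE.
exists (a |: K); split; first by rewrite cardsU1 aK Ki.
  by rewrite subUset sub1set aU KU.
by move=> b /setU1P[-> | /heavyK //]; exists v.
Qed.

Lemma sum_card_fiber_core_ge (U : {set 'I_n}) : #|U| = L ->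
  ((n - T)%:R * θ <=
    (\sum_r #|fiber_core L (prefix_state r) (prefix_state r U)|)%:R)%R.
Proof.
move=> UL; have [K [<- KU heavyK]] := heavy_outputs_subset UL (leqnn (n - T)).
set C := fun r => fiber_core L (prefix_state r) (prefix_state r U).
have heavy_core a : a \in K -> (θ <= #|[set r | a \in C r]|%:R)%R.
  move=> /heavyK[v [uv vT xa]]; apply: (le_trans xa); rewrite ler_nat.
  apply/subset_leq_card/subsetP => r; rewrite !inE => /eqP.
  exact: sa_run_in_fiber_core.
have double_count : \sum_(a in K) #|[set r | a \in C r]| <= \sum_r #|C r|.
  under eq_bigr do rewrite -sum1dep_card.
  rewrite (exchange_big_dep predT) //=; apply: leq_sum => r _.
  by rewrite sum1dep_card; apply/subset_leq_card/subsetP => a; rewrite !inE => /andP[].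
apply: le_trans (_ : (\sum_(a in K) #|[set r | a \in C r]|)%:R <= _)%R; last by rewrite ler_nat.
by rewrite natr_sum -sum1_card natr_sum mulr_suml; apply: ler_sum => a /heavy_core; rewrite mul1r.
Qed.

Lemma heavy_mass_le j : 4 * L <= 3 * n -> L <= n -> 2 ^ S * n * 3 ^ j <= 4 ^ j ->
  ((n - T)%:R * θ <= (#|RandStr m Rnd| * j.+1)%:R)%R.
Proof.
move=> L_small Ln hj.
set C := fun r U => fiber_core L (prefix_state r) (prefix_state r U).
have per_r r : \sum_(U : {set 'I_n} | #|U| == L) #|C r U| <= 'C(n, L) * j.+1.
  rewrite -[n in 'C(n, _)]card_ord; apply: sum_card_fiber_core; first by rewrite card_ord.
  by rewrite card_tuple card_bool card_ord.
have total : \sum_(U : {set 'I_n} | #|U| == L) \sum_r #|C r U|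
    <= #|RandStr m Rnd| * j.+1 * 'C(n, L).
  rewrite exchange_big; apply: leq_trans (leq_sum _ (fun r _ => per_r r)) _.
  by rewrite sum_nat_const mulnA mulnAC.
have C_gt0 : (0 < 'C(n, L)%:R :> R)%R by rewrite ltr0n bin_gt0.
rewrite -(ler_pM2r C_gt0) -natrM.
apply: (@le_trans _ _ ((\sum_(U : {set 'I_n} | #|U| == L) \sum_r #|C r U|)%N%:R)%R); last first.
  by rewrite ler_nat.
rewrite natr_sum (eq_bigl (fun U => U \in [set U : {set 'I_n} | #|U| == L])) => [|U]; last first.
  by rewrite inE.
rewrite -[in 'C(n, L)](card_ord n) -card_draws mulr_natr -sumr_const; apply: ler_sum => U.
by rewrite inE => /eqP; exact: sum_card_fiber_core_ge.
Qed.

End PrefixFibers.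

Local Open Scope ring_scope.

Lemma concentrated_count_ge (R : realType) n m S (Rnd : finType)
    (A : StreamAlg n m S Rnd) (k : R) :
  (0 < #|Rnd|)%N -> 0 < k -> concentrated A k ->
  forall x, exists a, #|RandStr m Rnd|%:R / k <= (sa_count A x a)%:R.
Proof.
move=> Rnd_gt0 k_gt0 concA x; have [a xa] := concA x; exists a.
move: xa; rewrite /sa_prob -/(sa_count A x a) ler_pdivlMr ?ltr0n ?card_RandStr_gt0 //.
by rewrite mulrC.
Qed.

Section FindDuplicate.
Variables (R : realType) (n : nat) (s : R) (S : nat) (Rnd : finType).
Variable A : StreamAlg n (fd_len n) S Rnd.
Hypotheses (n_ge8 : (8 <= n)%N) (s_gt0 : 0 < s) (Rnd_gt0 : (0 < #|Rnd|)%N).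
Hypotheses (zeroA : zero_error A) (concA : concentrated A (n%:R / s)).

Let N := #|RandStr (fd_len n) Rnd|.

Let N_gt0 : 0 < N%:R :> R.
Proof. by rewrite ltr0n card_RandStr_gt0. Qed.

Let n_gt0 : 0 < n%:R :> R.
Proof. by rewrite ltr0n; lia. Qed.

Lemma find_duplicate_threshold_gt0 : 0 < N%:R / (n%:R / s) :> R.
Proof. by rewrite !divr_gt0. Qed.

Lemma find_duplicate_heavy x : exists a, N%:R / (n%:R / s) <= (sa_count A x a)%:R.
Proof. exact: concentrated_count_ge (divr_gt0 n_gt0 s_gt0) concA x. Qed.

Let d : 'I_n := Ordinal (leq_trans (isT : (0 < 8)%N) n_ge8).

Lemma find_duplicate_memory_gt0 : (0 < S)%N.
Proof.
have [a xa] := find_duplicate_heavy (nseq_tuple _ d).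
have /sa_count_gt0P[r xra] : (0 < sa_count A (nseq_tuple _ d) a)%N.
  by rewrite -(ltr0n R); exact: lt_le_trans find_duplicate_threshold_gt0 xa.
by apply: zero_error_memory_gt0 zeroA _ xra; lia.
Qed.

Lemma find_duplicate_space_le l : (n <= 2 ^ l)%N -> s <= (8 * (3 * (S + l)).+1)%:R.
Proof.
(* [4 L <= 3 n] for the fiber bound, while [T <= 7 n / 8] leaves [n - T >= n / 8] outputs. *)
move=> n_le; pose L := (3 * n %/ 4)%N; pose T := (fd_len n - L)%N.
have LT_m : (L + T = fd_len n)%N by rewrite /T /L /fd_len; lia.
have L_small : (4 * L <= 3 * n)%N by rewrite /L; lia.
have L_le : (L <= n)%N by rewrite /L; lia.
have mass := heavy_mass_le zeroA d LT_m find_duplicate_threshold_gt0 find_duplicate_heavy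
  L_small L_le (exp2_exp3_le_exp4 S n_le).
rewrite (_ : _ * (N%:R / _) = N%:R * ((n - T)%:R * s / n%:R)) in mass; last first.
  by field; rewrite (gt_eqF n_gt0) (gt_eqF s_gt0).
rewrite natrM (ler_pM2l N_gt0) (ler_pdivrMr _ _ n_gt0) in mass.
have n_le_8 : n%:R <= 8 * (n - T)%:R :> R.
  by rewrite -natrM ler_nat /T /L /fd_len; lia.
rewrite natrM -(ler_pM2l n_gt0).
have := ler_wpM2r (ltW s_gt0) n_le_8.
move: mass; set a := (n - T)%:R; set B := _.+1%:R.
nra.
Qed.

End FindDuplicate.

Lemma trunc_log2_ln_le (R : realType) n : (0 < n)%N ->
  ln 2 * (trunc_log 2 n)%:R <= ln (n%:R : R).
Proof.
move=> n_gt0; rewrite mulr_natr -lnXn // ler_ln ?posrE ?exprn_gt0 ?ltr0n //.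
by rewrite -natrX ler_nat trunc_logP.
Qed.

Theorem mainTheorem3 (R : realType) :
  exists c : R, 0 < c /\
  exists n0 : nat, forall n : nat, (n0 <= n)%N ->
  forall s : R, 0 < s ->
  forall (S : nat) (Rnd : finType) (A : StreamAlg n (fd_len n) S Rnd),
    (0 < #|Rnd|)%N ->
    zero_error A ->
    concentrated A (n%:R / s) ->
    c * s / ln (n%:R : R) <= S%:R.
Proof.
have ln2_gt0 : 0 < ln (2 : R) by apply: ln_gt0; rewrite ltr1n.
exists (ln 2 / 30); split; first by rewrite divr_gt0.
exists (2 ^ 10)%N => n n_ge s s_gt0 S Rnd A Rnd_gt0 zeroA concA.
have n_ge8 : (8 <= n)%N by apply: leq_trans n_ge.
pose t := trunc_log 2 n.
have t_ge10 : (10 <= t)%N by apply: trunc_log_max.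
have S_gt0 := find_duplicate_memory_gt0 n_ge8 s_gt0 Rnd_gt0 zeroA concA.
have n_le : (n <= 2 ^ t.+1)%N by apply/ltnW/trunc_log_ltn.
have s_le : s <= (30 * t * S)%:R.
  by apply: (le_trans (find_duplicate_space_le n_ge8 s_gt0 Rnd_gt0 zeroA concA n_le)); rewrite ler_nat; nia.
have ln_n := trunc_log2_ln_le R (leq_trans (isT : (0 < 8)%N) n_ge8).
have ln_n_gt0 : 0 < ln (n%:R : R) by apply: ln_gt0; rewrite ltr1n; lia.
rewrite ler_pdivrMr // !natrM in s_le *.
have := ler_wpM2l (ltW ln2_gt0) s_le.
have := ler_wpM2l (ler0n R S) ln_n.
nra.
Qed.
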